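(* Every scattered polynomial $h(x)\in\mathbb{F}_{q^n}[x]$ in standard form is bijective as a map $\mathbb{F}_{q^n}\to\mathbb{F}_{q^n}$.
   Context: $q$ is a prime power, $n>1$. A $q$-polynomial $h(x)=\sum_{i=0}^{n-1}b_ix^{q^i}\in\mathbb{F}_{q^n}[x]$ is scattered if for all $y,z\in\mathbb{F}_{q^n}$, $zh(y)-yh(z)=0$ implies $y,z$ are $\mathbb{F}_q$-linearly dependent. Let $\Delta_h=\{(i-j)\bmod n\colon b_ib_j\neq0,\ i\neq j\}\cup\{n\}$ and $t_h=\gcd(\Delta_h)$; $h$ is in standard form if $t_h>1$. *)

From HB Require Import structures.
From mathcomp Require Import all_boot all_order all_algebra all_field.
Set Implicit Arguments. Unset Strict Implicit. Unset Printing Implicit Defensive.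
Import GRing.Theory.
Local Open Scope ring_scope.

Definition prime_power (q : nat) : Prop :=
  exists p k : nat, prime p /\ (0 < k)%N /\ q = (p ^ k)%N.

(* membership in the subfield F_q of F (elements fixed by x |-> x^q) *)
Definition in_Fq {F : finFieldType} (q : nat) (x : F) : bool := x ^+ q == x.

Definition qlin_eval {F : finFieldType} (q n : nat) (b : 'I_n -> F) (x : F) : F :=
  \sum_(i < n) b i * x ^+ (q ^ i).

Definition Fq_dependent {F : finFieldType} (q : nat) (y z : F) : Prop :=
  exists a c : F, [/\ in_Fq q a, in_Fq q c, (a != 0) || (c != 0) & a * y + c * z = 0].

Definition scattered {F : finFieldType} (q n : nat) (b : 'I_n -> F) : Prop :=
  forall y z : F, z * qlin_eval q b y - y * qlin_eval q b z = 0 -> Fq_dependent q y z.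

Definition t_h {F : finFieldType} (n : nat) (b : 'I_n -> F) : nat :=
  gcdn n (\big[gcdn/0%N]_(ij : 'I_n * 'I_n | (ij.1 != ij.2) && (b ij.1 * b ij.2 != 0))
            ((ij.1 + n - ij.2) %% n)%N).

Definition standard_form {F : finFieldType} (n : nat) (b : 'I_n -> F) : Prop :=
  (1 < t_h b)%N.

(** A scattered q-polynomial h is F_q-linear, so it suffices to show that its
    kernel is trivial.  Put t = t_h.  All exponents q^i occurring in h agree
    modulo q^t - 1 on F_{q^t}, hence h(l w) = l^(q^s) h(w) for l in F_{q^t},
    and the kernel of h is an F_{q^t}-subspace.  Since t > 1 divides n there is
    l in F_{q^t} outside F_q.  For w != 0 in the kernel, w and l w are both
    killed by h, so scatteredness makes them F_q-dependent and forces l into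
    F_q: a contradiction. *)

From mathcomp Require Import all_boot all_order all_algebra all_field.
From mathcomp Require Import cyclic.
Import GRing.Theory.
Local Open Scope ring_scope.
Set Implicit Arguments. Unset Strict Implicit.

Lemma dvdn_pred_expn (q t n : nat) : (t %| n)%N -> ((q ^ t).-1 %| (q ^ n).-1)%N.
Proof.
move=> /dvdnP[m ->]; rewrite -!subn1 mulnC expnM -{2}(exp1n m) subn_exp.
exact: dvdn_mulr.
Qed.

Lemma expr_qpow_modn (R : pzRingType) (q t : nat) (l : R) :
  l ^+ (q ^ t) = l -> forall i, l ^+ (q ^ i) = l ^+ (q ^ (i %% t)).
Proof.
move=> l_fix i; rewrite {1}(divn_eq i t) mulnC.
elim: (i %/ t)%N => [|m IHm]; first by rewrite muln0 add0n.
by rewrite mulnS -addnA expnD exprM l_fix.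
Qed.

Lemma finField_prim_root (F : finFieldType) :
  exists z : F, (#|F|.-1).-primitive_root z.
Proof.
have card_gt0 : (0 < #|F|.-1)%N by rewrite -subn1 subn_gt0 finNzRing_gt1.
have unity_nz : all (#|F|.-1).-unity_root (enum (predC1 (0 : F))).
  apply/allP => x; rewrite mem_enum /= => x_neq0; rewrite unity_rootE.
  apply/eqP/(mulfI x_neq0).
  by rewrite mulr1 -exprS prednK ?expf_card // ltnW // finNzRing_gt1.
have := has_prim_root card_gt0 unity_nz (enum_uniq _).
by rewrite -cardE cardC1 leqnn => /(_ isT) /hasP[z _ z_prim]; exists z.
Qed.

(* The element l is a generator of F_{q^t}^*, of order q^t - 1 > q - 1. *)
Lemma finField_subfield_elem (F : finFieldType) (q n t : nat) :
  (1 < q)%N -> #|F| = (q ^ n)%N -> (t %| n)%N -> (1 < t)%N ->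
  exists2 l : F, l ^+ (q ^ t) = l & l ^+ q != l.
Proof.
move=> q_gt1 cardF t_dvd_n t_gt1.
have [z z_prim] := finField_prim_root F.
have qt_gt_q : (q < q ^ t)%N by rewrite -{1}(expn1 q) ltn_exp2l.
have qt_gt1 : (1 < q ^ t)%N := ltn_trans q_gt1 qt_gt_q.
have /(dvdn_prim_root z_prim) l_prim : ((q ^ t).-1 %| #|F|.-1)%N.
  by rewrite cardF dvdn_pred_expn.
set l := z ^+ _ in l_prim.
have l_neq0 : l != 0 by rewrite (prim_root_eq0 l_prim) -lt0n -subn1 subn_gt0.
exists l; first by rewrite -(prednK (ltnW qt_gt1)) exprS (prim_expr_order l_prim) mulr1.
apply: contraTneq qt_gt_q => l_fixq.
have : l ^+ q.-1 == 1.
  by apply/eqP/(mulfI l_neq0); rewrite -exprS prednK ?mulr1 // ltnW.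
rewrite -(prim_order_dvd l_prim) => /dvdn_leq le_pred.
have /le_pred : (0 < q.-1)%N by rewrite -subn1 subn_gt0.
by apply: contraL => lt_q_qt; rewrite -ltnNge -!subn1 ltn_sub2r // (ltn_trans _ lt_q_qt).
Qed.

Section StandardForm.
Variables (F : finFieldType) (n : nat) (b : 'I_n -> F).

Lemma t_h_dvdn : (t_h b %| n)%N.
Proof. exact: dvdn_gcdl. Qed.

Lemma t_h_support_modn (i j : 'I_n) :
  b i != 0 -> b j != 0 -> (i = j %[mod t_h b])%N.
Proof.
move=> bi_neq0 bj_neq0; have [-> // | i_neq_j] := eqVneq i j.
have : (t_h b %| (i + n - j) %% n)%N.
  apply: dvdn_trans (dvdn_gcdr _ _) (biggcdn_inf (i, j) _ _) => //=.
  by rewrite i_neq_j mulf_neq0.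
have j_le : (j <= i + n)%N by rewrite (leq_trans (ltnW (ltn_ord j))) ?leq_addl.
rewrite /dvdn (modn_dvdm _ t_h_dvdn) -/(dvdn _ _) -eqn_mod_dvd //.
by rewrite -modnDmr (eqP t_h_dvdn) addn0 => /eqP.
Qed.

End StandardForm.

Section QPolynomial.
Variables (F : finFieldType) (q n : nat) (b : 'I_n -> F).
Local Notation h := (qlin_eval q b).

Lemma qlin_evalB : [pchar F].-nat q -> forall x y, h (x - y) = h x - h y.
Proof.
move=> pcharFq x y; rewrite /qlin_eval -sumrB; apply: eq_bigr => i _.
have pcharFqi : [pchar F].-nat (q ^ i)%N by rewrite pnatX pcharFq.
by rewrite exprDn_pchar // exprNn_pchar // mulrBr.
Qed.

Lemma qlin_evalMl (l y : F) (s : 'I_n) :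
  l ^+ (q ^ t_h b) = l -> b s != 0 -> h (l * y) = l ^+ (q ^ s) * h y.
Proof.
move=> l_fix bs_neq0; rewrite /qlin_eval mulr_sumr; apply: eq_bigr => i _.
have [-> | bi_neq0] := eqVneq (b i) 0; first by rewrite !mul0r mulr0.
rewrite exprMn (expr_qpow_modn l_fix i) (t_h_support_modn bi_neq0 bs_neq0).
by rewrite -(expr_qpow_modn l_fix) mulrCA mulrA.
Qed.

Lemma qlin_eval_kernelMl (l w : F) :
  l ^+ (q ^ t_h b) = l -> h w = 0 -> h (l * w) = 0.
Proof.
move=> l_fix hw; have [s bs_neq0 | b0] := pickP (fun i => b i != 0).
  by rewrite (qlin_evalMl _ l_fix bs_neq0) hw mulr0.
by apply: big1 => i _; move/negbFE/eqP: (b0 i) => ->; rewrite mul0r.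
Qed.

Lemma scattered_kernel_Fq (l w : F) : [pchar F].-nat q -> scattered q b ->
  h w = 0 -> h (l * w) = 0 -> w != 0 -> in_Fq q l.
Proof.
move=> pcharFq scat hw hlw w_neq0.
have [a [c [a_Fq c_Fq ac_neq0 dep]]] : Fq_dependent q w (l * w).
  by apply: scat; rewrite hw hlw !mulr0 subrr.
have a_cl : a + c * l = 0.
  by move/eqP: dep; rewrite mulrA -mulrDl mulf_eq0 (negbTE w_neq0) orbF => /eqP.
have c_neq0 : c != 0.
  apply: contraTneq ac_neq0 => c0.
  by move: a_cl; rewrite c0 mul0r addr0 => ->; rewrite eqxx.
have -> : l = - a / c.
  apply: (mulIf c_neq0); rewrite divfK // mulrC.
  by apply/eqP; rewrite -addr_eq0 addrC a_cl.
by rewrite /in_Fq exprMn exprVn exprNn_pchar // (eqP a_Fq) (eqP c_Fq).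
Qed.

End QPolynomial.

Theorem theorem4p5 (F : finFieldType) (q n : nat) (b : 'I_n -> F) :
  prime_power q -> (1 < n)%N -> #|F| = (q ^ n)%N ->
  scattered q b -> standard_form b ->
  bijective (qlin_eval q b).
Proof.
move=> [p [k [p_pr [k_gt0 q_def]]]] _ cardF scat t_gt1.
have q_gt1 : (1 < q)%N by rewrite q_def -{1}(expn0 p) ltn_exp2l ?prime_gt1.
have p_char : p \in [pchar F].
  by apply: (@card_finPcharP _ _ (k * n)); rewrite // expnM -q_def.
have pcharFq : [pchar F].-nat q by rewrite q_def pnatX (pnatE _ p_pr) p_char.
have [l l_fix l_notFq] := finField_subfield_elem q_gt1 cardF (t_h_dvdn b) t_gt1.
apply: injF_bij => x y hxy; apply/eqP; rewrite -subr_eq0.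
apply: contraNT l_notFq => w_neq0.
have hw : qlin_eval q b (x - y) = 0 by rewrite qlin_evalB // hxy subrr.
exact: scattered_kernel_Fq pcharFq scat hw (qlin_eval_kernelMl l_fix hw) w_neq0.
Qed.
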